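(* For any positive integers $k$ and $M$ such that $k$ is a power of $2$, there exist a set $X$, $k$ families $F_1,\dots,F_k$ of functions with domain $X$ and codomain $\{0,1\}$, and a function $g:\{0,1\}^k\to\{0,1\}$ such that $\mathrm{opt}_{\mathrm{std}}(F_i)\le M$ for all $i\in\{1,\dots,k\}$ and \[\mathrm{opt}_{\mathrm{std}}(\mathrm{COMPOSE}(F_1,\dots,F_k,g))\ge\tfrac12 kM\log_2(k).\]
   Context: For a family $F$ of functions from a set $X$ to a set $Y$, $\mathrm{opt}_{\mathrm{std}}(F)$ is the worst-case number of mistakes in the standard online learning model under optimal play: an adversary secretly fixes $f\in F$ and presents inputs $x_1,x_2,\dots\in X$ adaptively; after each input the learner guesses $f(x_t)$ and the adversary then reveals $f(x_t)$; a mistake is an incorrect guess; the learner minimizes and the adversary maximizes the number of mistakes. $\mathrm{COMPOSE}(F_1,\dots,F_k,g)$ is the family of all functions $x\mapsto g(f_1(x),\dots,f_k(x))$ on $X$ with $f_i\in F_i$ for each $i$. *)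

From mathcomp Require Import all_boot.
Set Implicit Arguments. Unset Strict Implicit. Unset Printing Implicit Defensive.

Definition fnfamily (X Y : Type) := (X -> Y) -> Prop.

Definition restrict (X Y : Type) (S : fnfamily X Y) (x : X) (y : Y) : fnfamily X Y :=
  fun f => S f /\ f x = y.

(* [forces S m] : in the standard online learning model, starting with the
   set S of target functions still consistent with the revealed labels, the
   adversary has a strategy that forces at least m (further) mistakes against
   every (deterministic, adaptive) learner.  At each round the adversary
   presents x, the learner guesses y, the adversary reveals a label y'
   consistent with some remaining function (so some f in the original fnfamily
   is consistent with all revealed labels, i.e. could have been fixed
   secretly); a mistake is y' <> y.  The inductive definition allows
   arbitrarily many (finitely many along every play) rounds. *)
Inductive forces (X Y : Type) : fnfamily X Y -> nat -> Prop :=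
| forces_base (S : fnfamily X Y) : (exists f, S f) -> forces S 0
| forces_step (S : fnfamily X Y) (m : nat) (x : X) :
    (forall y : Y, exists (y' : Y) (n : nat),
        forces (restrict S x y') n /\
        ((y' = y /\ m <= n) \/ (y' <> y /\ m <= n.+1))) ->
    forces S m.

Definition opt_std_le (X Y : Type) (F : fnfamily X Y) (M : nat) : Prop :=
  ~ forces F M.+1.

Definition opt_std_ge (X Y : Type) (F : fnfamily X Y) (n : nat) : Prop :=
  forces F n.

Definition COMPOSE (X : Type) (k : nat) (F : 'I_k -> fnfamily X bool)
  (g : ('I_k -> bool) -> bool) : fnfamily X bool :=
  fun h => exists fs : 'I_k -> X -> bool,
      (forall i, F i (fs i)) /\ (forall x, h x = g (fun i => fs i x)).

(* Take X = nat * nat, let F_i consist of the functions (p, l) |-> [p \in A] && bit l of i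
   with |A| <= M, and let g be OR.  A learner for F_i that predicts [p \in A] only for
   positions already seen in A errs once per element of A, so opt_std(F_i) <= M.
   The composition contains (p, l) |-> bit l of s_p for every sequence s of labels < k
   using each label at most M times.  The adversary reveals such an s position by
   position, choosing each label by walking down the binary tree of depth log2 k over
   the labels; at every node whose two subtrees both have remaining capacity it asks the
   corresponding bit and answers against the learner.  The potential "sum over nodes of
   the smaller of the two subtree capacities" drops by at most the number of mistakes
   forced per label, and it starts at k M log2 k / 2. *)

From mathcomp Require Import all_boot zify.
Set Implicit Arguments. Unset Strict Implicit.

Section Forces.
Context {X Y : Type}.

(* [forces] occurs nested under quantifiers in its constructor, so the
   generated induction principle carries no induction hypothesis. *)
Lemma forces_nested_ind (P : fnfamily X Y -> nat -> Prop) :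
  (forall S, (exists f, S f) -> P S 0) ->
  (forall S m x, (forall y, exists y' n,
      [/\ forces (restrict S x y') n, P (restrict S x y') n &
          (y' = y /\ m <= n) \/ (y' <> y /\ m <= n.+1)]) -> P S m) ->
  forall S m, forces S m -> P S m.
Proof.
move=> Pbase Pstep; fix IH 3 => S m [{}S Sne | {}S {}m x step].
  exact: Pbase.
apply: (Pstep S m x) => y; case: (step y) => y' [n [fn mn]].
by exists y', n; split=> //; apply: IH.
Qed.

Lemma forces_nonempty (y0 : Y) {S : fnfamily X Y} {m} : forces S m -> exists f, S f.
Proof.
elim/forces_nested_ind=> {S m} // S m x step.
by have [y' [n [_ [f [Sf _]] _]]] := step y0; exists f.
Qed.

Lemma forces_sub (S S' : fnfamily X Y) m :
  (forall f, S f -> S' f) -> forces S m -> forces S' m.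
Proof.
move=> sub fS; elim/forces_nested_ind: fS S' sub => {S m} [S [f Sf]|S m x step] S' sub.
  by apply: forces_base; exists f; apply: sub.
apply: (@forces_step _ _ _ _ x) => y; have [y' [n [_ IH mn]]] := step y.
by exists y', n; split=> //; apply: IH => f [Sf fx]; split=> //; apply: sub.
Qed.

Lemma forces_leq (S : fnfamily X Y) m n : forces S m -> n <= m -> forces S n.
Proof.
case=> {S m} [S Sne | S m x step] le_nm.
  by move: le_nm; rewrite leqn0 => /eqP ->; apply: forces_base.
apply: (@forces_step _ _ _ _ x) => y; have [y' [n' [fn' mn']]] := step y.
by exists y', n'; split=> //; case: mn' => -[? ?]; [left | right]; split=> //; lia.
Qed.

End Forces.

Lemma forces_split {X : Type} (S : fnfamily X bool) x m :
  (forall y, forces (restrict S x y) m) -> forces S m.+1.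
Proof.
move=> fS; apply: (@forces_step _ _ _ _ x) => y.
by exists (~~ y), m; split; [apply: fS | right; case: y].
Qed.

Section MembershipFamily.
Context {X : Type} {P : eqType}.
Variables (pos : X -> P) (mask : X -> bool).

Definition membership_family (K : pred P) (c : nat) : fnfamily X bool :=
  fun f => exists A : seq P,
    size A <= c /\ forall x, f x = (K (pos x) || (pos x \in A)) && mask x.

(* The learner predicts [K (pos x) && mask x], with [K] the positions already
   known to be in [A]; each mistake moves a new position of [A] into [K]. *)
Lemma forces_membership_family_leq K c (S : fnfamily X bool) m :
  (forall f, S f -> membership_family K c f) -> forces S m -> m <= c.
Proof.
move=> SK fS; elim/(@forces_nested_ind X bool): fS K c SK => {S m} // S m x step K c SK.
have [y' [n [fn IH [[_ le_mn] | [y'_wrong le_mn]]]]] := step (K (pos x) && mask x).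
  by apply: leq_trans le_mn (IH K c _) => f [/SK].
have [f [Sf fx]] := forces_nonempty true fn.
have [A [sizeA fA]] := SK f Sf.
have [Kx0 mx xA] : [/\ K (pos x) = false, mask x & pos x \in A].
  by move: y'_wrong; rewrite -fx fA; case: (K _); case: (mask x); case: (_ \in A).
have c_gt0 : 0 < c by apply: leq_trans sizeA; case: (A) xA.
suff : n <= c.-1 by lia.
apply: (IH (predU K (pred1 (pos x))) c.-1) => f' [Sf' f'x].
have [A' [sizeA' fA']] := SK f' Sf'.
have xA' : pos x \in A'.
  by move: f'x; rewrite -fx fA fA' Kx0 mx xA; case: (_ \in A').
exists (rem (pos x) A'); split; first by rewrite size_rem //; lia.
move=> x'; rewrite fA' (perm_mem (perm_to_rem xA')) inE /=.
by rewrite -orbA.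
Qed.

Lemma opt_std_le_membership_family c : opt_std_le (membership_family pred0 c) c.
Proof.
move=> fS; have := @forces_membership_family_leq pred0 c _ _ (fun f Sf => Sf) fS.
by rewrite ltnn.
Qed.

End MembershipFamily.

Lemma divn_pow2S i d : i %/ 2 ^ d.+1 = i %/ 2 ^ d %/ 2.
Proof. by rewrite expnSr divnMA. Qed.

Lemma divn_pow2S_eq i d b :
  i %/ 2 ^ d.+1 = b <-> i %/ 2 ^ d = b.*2 \/ i %/ 2 ^ d = b.*2.+1.
Proof. by rewrite divn_pow2S; move: (i %/ 2 ^ d) => q; split; lia. Qed.

Fixpoint capacity (d b : nat) (c : nat -> nat) : nat :=
  if d is d'.+1 then capacity d' b.*2 c + capacity d' b.*2.+1 c else c b.

Fixpoint potential (d b : nat) (c : nat -> nat) : nat :=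
  if d is d'.+1 then
    minn (capacity d' b.*2 c) (capacity d' b.*2.+1 c)
      + potential d' b.*2 c + potential d' b.*2.+1 c
  else 0.

Fixpoint branchings (d b : nat) (c : nat -> nat) (i : nat) : nat :=
  if d is d'.+1 then
    (0 < capacity d' b.*2 c) && (0 < capacity d' b.*2.+1 c)
      + branchings d' (i %/ 2 ^ d') c i
  else 0.

Definition consume (c : nat -> nat) (i : nat) : nat -> nat :=
  fun x => if x == i then (c x).-1 else c x.

Lemma eq_in_capacity_potential d b c c' :
  (forall i, i %/ 2 ^ d = b -> c i = c' i) ->
  capacity d b c = capacity d b c' /\ potential d b c = potential d b c'.
Proof.
elim: d b => [|d IH] b eq_cc' /=; first by rewrite eq_cc' // expn0 divn1.
have [-> ->] := IH b.*2 (fun i ib => eq_cc' i (proj2 (divn_pow2S_eq i d b) (or_introl ib))).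
by have [-> ->] :=
  IH b.*2.+1 (fun i ib => eq_cc' i (proj2 (divn_pow2S_eq i d b) (or_intror ib))).
Qed.

Lemma capacity_gt0 d b c : 0 < capacity d b c -> exists i, i %/ 2 ^ d = b /\ 0 < c i.
Proof.
elim: d b => [|d IH] b /= cap_gt0; first by exists b; rewrite expn0 divn1.
have [i [ib ci]] : exists i, (i %/ 2 ^ d = b.*2 \/ i %/ 2 ^ d = b.*2.+1) /\ 0 < c i.
  case: (posnP (capacity d b.*2 c)) => [capL0 | /IH [i [ib ci]]]; last by exists i; auto.
  by move: cap_gt0; rewrite capL0 => /IH [i [ib ci]]; exists i; auto.
by exists i; rewrite divn_pow2S_eq.
Qed.

Lemma potential_capacity0 d b c : capacity d b c = 0 -> potential d b c = 0.
Proof.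
elim: d b => [|d IH] b //= /eqP; rewrite addn_eq0 => /andP [/eqP capL0 /eqP capR0].
by rewrite capL0 capR0 !IH.
Qed.

Lemma capacity_potential_consume_out d b c i : i %/ 2 ^ d <> b ->
  capacity d b (consume c i) = capacity d b c /\ potential d b (consume c i) = potential d b c.
Proof.
move=> ib; apply: eq_in_capacity_potential => x xb; rewrite /consume.
by case: eqP => // xi; rewrite -xi in ib.
Qed.

Lemma capacity_consume d b c i : i %/ 2 ^ d = b -> 0 < c i ->
  capacity d b c = (capacity d b (consume c i)).+1.
Proof.
elim: d b => [|d IH] b /=.
  by rewrite expn0 divn1 => -> ci; rewrite /consume eqxx prednK.
move=> /divn_pow2S_eq [] ib ci; rewrite (IH _ ib ci).
  by rewrite (proj1 (@capacity_potential_consume_out d b.*2.+1 c i _)); lia.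
by rewrite (proj1 (@capacity_potential_consume_out d b.*2 c i _)); lia.
Qed.

(* Consuming one unit at leaf [i] lowers each [minn] term along the path to
   [i] by at most one, and only where both children are nonempty. *)
Lemma potential_consume d b c i : i %/ 2 ^ d = b -> 0 < c i ->
  potential d b c <= branchings d b c i + potential d b (consume c i).
Proof.
elim: d b => [|d IH] b //= /divn_pow2S_eq [] ib ci.
  have [capR potR] := @capacity_potential_consume_out d b.*2.+1 c i ltac:(lia).
  have := IH _ ib ci; have := capacity_consume ib ci; rewrite ib capR potR.
  by case: (posnP (capacity d b.*2.+1 c)) => [-> | _] /=; rewrite ?andbF ?andbT; lia.
have [capL potL] := @capacity_potential_consume_out d b.*2 c i ltac:(lia).
have := IH _ ib ci; have := capacity_consume ib ci; rewrite ib capL potL.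
by case: (posnP (capacity d b.*2 c)) => [-> | _] /=; lia.
Qed.

Lemma capacity_const M d b : capacity d b (fun=> M) = 2 ^ d * M.
Proof. by elim: d b => [|d IH] b /=; [rewrite mul1n | rewrite !IH expnS; lia]. Qed.

Lemma potential_const M d b : 2 * potential d b (fun=> M) = 2 ^ d * M * d.
Proof.
elim: d b => [|d IH] b /=; first by rewrite !muln0.
by rewrite !capacity_const minnn !mulnDr !IH expnS; nia.
Qed.

Definition bit (i l : nat) : bool := odd (i %/ 2 ^ l).

(* The sequence [s] of leaf labels encodes the target (p, l) |-> bit l of s_p,
   constantly false beyond [size s]. *)
Definition encode (s : seq nat) : nat * nat -> bool :=
  fun x => (x.1 < size s) && bit (nth 0 s x.1) x.2.

Lemma encode_next s i t l : encode (s ++ i :: t) (size s, l) = bit i l.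
Proof. by rewrite /encode /= size_cat /= nth_cat ltnn subnn /= addnS ltnS leq_addr. Qed.

Section Adversary.
Variables k M : nat.

Definition admissible (s : seq nat) :=
  (forall a, a \in s -> a < k) /\ (forall i, count_mem i s <= M).

Definition completions (s : seq nat) : fnfamily (nat * nat) bool :=
  fun h => exists t, admissible (s ++ t) /\ h = encode (s ++ t).

Definition completions_with (s : seq nat) (P : pred nat) : fnfamily (nat * nat) bool :=
  fun h => exists i t, P i /\ admissible (s ++ i :: t) /\ h = encode (s ++ i :: t).

Definition remaining (s : seq nat) (i : nat) : nat := M - count_mem i s.

Lemma remaining_rcons s i : remaining (rcons s i) =1 consume (remaining s) i.
Proof.
move=> x; rewrite /remaining /consume -cats1 count_cat /=.
by case: (eqVneq x i) => [-> | _] /=; lia.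
Qed.

Lemma admissible_rcons s i :
  admissible s -> i < k -> 0 < remaining s i -> admissible (rcons s i).
Proof.
move=> [sk sM] ik; rewrite subn_gt0 => iM; split=> [a | x]; rewrite -cats1.
  by rewrite mem_cat inE => /orP [/sk | /eqP ->].
by rewrite count_cat /=; case: (eqVneq i x) => [<- | _] /=; rewrite ?addn0 ?addn1.
Qed.

Lemma completions_rcons_sub (P : pred nat) s i : P i ->
  forall h, completions (rcons s i) h -> completions_with s P h.
Proof. by move=> Pi h [t]; rewrite cat_rcons => -[adm ->]; exists i, t. Qed.

Lemma completions_with_sub (P Q : pred nat) s : (forall i, P i -> Q i) ->
  forall h, completions_with s P h -> completions_with s Q h.
Proof. by move=> PQ h [i [t [/PQ Qi rest]]]; exists i, t. Qed.

Lemma completions_with_completions (P : pred nat) s h :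
  completions_with s P h -> completions s h.
Proof. by move=> [i [t [_ rest]]]; exists (i :: t). Qed.

(* The adversary chooses the next label by walking down from node [b] at
   height [d], querying bit [d'] of the label at a node of height [d'.+1]
   only when both of its subtrees still have capacity; there every answer of
   the learner is wrong. *)
Lemma forces_descent (c : nat -> nat) d b s m :
  (exists i, i %/ 2 ^ d = b /\ 0 < c i) ->
  (forall i, i %/ 2 ^ d = b -> 0 < c i ->
     exists n, forces (completions (rcons s i)) n /\ m <= n + branchings d b c i) ->
  forces (completions_with s (fun i => i %/ 2 ^ d == b)) m.
Proof.
elim: d b m => [|d IHd] b m [i0 [i0b ci0]] next.
  rewrite expn0 divn1 in i0b; subst i0.
  have [n [fn le_mn]] := next b (divn1 b) ci0.
  rewrite addn0 in le_mn; apply: forces_leq le_mn.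
  by apply: forces_sub fn; apply: completions_rcons_sub; rewrite expn0 divn1.
case: (boolP ((0 < capacity d b.*2 c) && (0 < capacity d b.*2.+1 c))) =>
  [/andP [capL capR] | no_branch].
  apply: (forces_leq _ (leqSpred m)); apply: (@forces_split _ _ (size s, d)) => y.
  have parent i : i %/ 2 ^ d = b.*2 + y -> i %/ 2 ^ d.+1 = b.
    by rewrite divn_pow2S => ->; case: y; lia.
  apply: forces_sub (IHd (b.*2 + y) m.-1 _ _) => [h [i [t [/eqP ib [adm ->]]]] | | i ib ci].
  - split; first by exists i, t; rewrite (parent i ib).
    by rewrite encode_next /bit ib oddD odd_double oddb.
  - by apply: capacity_gt0; case: y {parent}; rewrite ?addn0 ?addn1.
  - have [n [fn le_mn]] := next i (parent i ib) ci.
    by exists n; split=> //; move: le_mn => /=; rewrite ib capL capR; lia.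
have parent i : i %/ 2 ^ d = i0 %/ 2 ^ d -> i %/ 2 ^ d.+1 = b.
  by rewrite divn_pow2S => ->; rewrite -divn_pow2S.
apply: forces_sub (IHd (i0 %/ 2 ^ d) m _ _) => [| | i ib ci].
- by apply: completions_with_sub => i /eqP /parent ->.
- by exists i0.
- have [n [fn le_mn]] := next i (parent i ib) ci.
  by exists n; split=> //; move: le_mn => /=; rewrite ib (negPf no_branch).
Qed.

Lemma forces_completions j s : k = 2 ^ j -> admissible s ->
  forces (completions s) (potential j 0 (remaining s)).
Proof.
move=> kE; have [N] := ubnP (capacity j 0 (remaining s)).
elim: N s => // N IH s cap_lt adm.
case: (posnP (capacity j 0 (remaining s))) => [cap0 | cap_gt0].
  rewrite (potential_capacity0 cap0); apply: forces_base.
  by exists (encode s), [::]; rewrite cats0.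
apply: forces_sub (@completions_with_completions _ s) _.
apply: forces_descent (capacity_gt0 cap_gt0) _ => i i_leaf ci.
have [capE potE] := @eq_in_capacity_potential j 0 _ _ (fun x _ => remaining_rcons s i x).
exists (potential j 0 (remaining (rcons s i))); split; last first.
  by rewrite potE addnC; apply: potential_consume.
apply: IH; last apply: admissible_rcons adm _ ci.
  by move: cap_lt; rewrite capE (capacity_consume i_leaf ci).
by rewrite kE ltnNge -divn_gt0 ?expn_gt0 // i_leaf.
Qed.

End Adversary.

Definition positions (i : nat) (t : seq nat) : seq nat :=
  [seq p <- iota 0 (size t) | nth 0 t p == i].

Lemma size_positions i t : size (positions i t) = count_mem i t.
Proof. by rewrite size_filter -[in RHS](mkseq_nth 0 t) /mkseq count_map. Qed.

Lemma mem_positions i t p : (p \in positions i t) = (p < size t) && (nth 0 t p == i).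
Proof. by rewrite mem_filter mem_iota andbC. Qed.

Definition bit_family (M i : nat) : fnfamily (nat * nat) bool :=
  membership_family fst (fun x => bit i x.2) pred0 M.

Lemma encode_in_COMPOSE k M t : admissible k M t ->
  COMPOSE (fun i : 'I_k => bit_family M i) (fun b => [exists i, b i]) (encode t).
Proof.
move=> [tk tM]; exists (fun i x => (x.1 \in positions i t) && bit i x.2); split.
  by move=> i; exists (positions i t); rewrite size_positions.
case=> p l; rewrite /encode /=.
case: (ltnP p (size t)) => pt; last first.
  by apply/esym/existsP => -[i]; rewrite mem_positions ltnNge pt.
have ptk : nth 0 t p < k by apply/tk/mem_nth.
apply/idP/existsP => [bitp | [i]].
  by exists (Ordinal ptk); rewrite mem_positions pt eqxx.
by rewrite mem_positions pt => /andP [/eqP <-].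
Qed.

Unset Implicit Arguments.

Theorem mainTheorem14 (k M j : nat) (hk : k = 2 ^ j) (hM : 0 < M) :
  exists (X : Type) (F : 'I_k -> fnfamily X bool) (g : ('I_k -> bool) -> bool),
    (forall i : 'I_k, opt_std_le (F i) M) /\
    (forall n : nat, 2 * n <= k * M * j -> opt_std_ge (COMPOSE F g) n).
Proof.
exists (nat * nat)%type, (fun i : 'I_k => bit_family M i), (fun b => [exists i, b i]).
split=> [i | n le_n]; first exact: opt_std_le_membership_family.
have adm0 : admissible k M [::] by [].
have pot0 : 2 * potential j 0 (remaining M [::]) = k * M * j.
  have [_ ->] := @eq_in_capacity_potential j 0 _ (fun=> M) (fun i _ => subn0 M).
  by rewrite potential_const hk.
apply: forces_sub (forces_leq (forces_completions hk adm0) _) => [h [t [adm ->]] | ].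
  exact: encode_in_COMPOSE.
by lia.
Qed.
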